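(* Let $A\in\mathbb{R}^{l\times m}$ and $B\in\mathbb{R}^{n\times m}$, and consider the parametrized system $A\,(c\circ x^B)=0$ with parameters $c\in\mathbb{R}^m_{>0}$. Assume $\ker A\cap\mathbb{R}^m_{>0}\neq\emptyset$, that the coefficient polytope $P$ is one-dimensional ($\dim P=1$), and that the monomial dependency is one ($d=1$). Let $\omega$, $\tilde b\in\mathbb{R}^\omega$ be as defined in the context. If $$\sum_{i'=1}^{i}\tilde b_{i'}\ge 0\ \text{ for all } i=1,\dots,\omega-1 \quad(\text{or } \textstyle\sum_{i'=1}^{i}\tilde b_{i'}\le 0 \text{ for all } i=1,\dots,\omega-1)$$ and $\tilde b_1\cdot\tilde b_\omega<0$, then $|Y_c|=1$ for all $c\in\mathbb{R}^m_{>0}$.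
   Context: Notation: for $x\in\mathbb{R}^n_{>0}$ and $y\in\mathbb{R}^n$, $x^y=\prod_{i=1}^n x_i^{y_i}$; for a matrix $B=(b^1,\dots,b^m)\in\mathbb{R}^{n\times m}$, $x^B\in\mathbb{R}^m_{>0}$ is the vector with entries $x^{b^j}$; $\circ$ denotes the componentwise product, and $(\cdot)^{-1}$ applied to a positive vector is componentwise. $1_m\in\mathbb{R}^m$ is the all-ones vector. (One class setting.) The coefficient polytope is $P=\{y\in\ker A\cap\mathbb{R}^m_{>0} : 1_m\cdot y=1\}$. The monomial dependency subspace is $D=\ker\begin{pmatrix}B\\ 1_m^{\mathsf T}\end{pmatrix}\subseteq\mathbb{R}^m$ and the monomial dependency is $d=\dim D$. The solution set on the coefficient polytope is $Y_c=\{y\in P : y^z=c^z \text{ for all } z\in D\}$. When $\dim P=1$, the closure $\overline P=\{y\in\ker A\cap\mathbb{R}^m_{\ge0}: 1_m\cdot y=1\}$ is a line segment with two endpoints $y^1,y^2$; set $q=(y^1-y^2)\circ(y^1+y^2)^{-1}\in\mathbb{R}^m$, and assume (after reordering the indices $\{1,\dots,m\}$) that $1=q_1\ge q_2\ge\cdots\ge q_m=-1$. Let $I_1,\dots,I_\omega\subseteq\{1,\dots,m\}$ be the $\omega$ equivalence classes of indices with equal (consecutive) components of $q$, ordered so that the common value $\tilde q_i$ of $q$ on $I_i$ is strictly decreasing in $i$. When $d=1$, let $b\in\mathbb{R}^m$ span $D$, and define the lumped vector $\tilde b\in\mathbb{R}^\omega$ by $\tilde b_i=\sum_{i'\in I_i}b_{i'}$.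 *)

From HB Require Import structures.
From mathcomp Require Import all_boot all_order all_algebra.
From mathcomp Require Import all_classical all_reals exp.
Set Implicit Arguments. Unset Strict Implicit. Unset Printing Implicit Defensive.
Import Order.TTheory GRing.Theory Num.Theory.
Local Open Scope ring_scope.

Section Defs.
Variable R : realType.

Definition vpow (m : nat) (y z : 'cV[R]_m) : R :=
  \prod_(j < m) powR (y j 0) (z j 0).

Definition inP (l m : nat) (A : 'M[R]_(l, m)) (y : 'cV[R]_m) : Prop :=
  A *m y = 0 /\ (forall j, 0 < y j 0) /\ \sum_(j < m) y j 0 = 1.

Definition inPbar (l m : nat) (A : 'M[R]_(l, m)) (y : 'cV[R]_m) : Prop :=
  A *m y = 0 /\ (forall j, 0 <= y j 0) /\ \sum_(j < m) y j 0 = 1.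

Definition aff_indep (m k : nat) (Y : 'I_k.+1 -> 'cV[R]_m) : bool :=
  row_free (\matrix_(i < k, j < m) (Y (lift ord0 i) j 0 - Y ord0 j 0)).

Definition affdim_eq (m : nat) (S : 'cV[R]_m -> Prop) (k : nat) : Prop :=
  (exists Y : 'I_k.+1 -> 'cV[R]_m, (forall i, S (Y i)) /\ aff_indep Y) /\
  (forall Y : 'I_k.+2 -> 'cV[R]_m, (forall i, S (Y i)) -> ~~ aff_indep Y).

Definition B1 (n m : nat) (B : 'M[R]_(n, m)) : 'M[R]_(n + 1, m) :=
  col_mx B (const_mx 1).

Definition inD (n m : nat) (B : 'M[R]_(n, m)) (z : 'cV[R]_m) : Prop :=
  B1 B *m z = 0.

Definition mondep (n m : nat) (B : 'M[R]_(n, m)) : nat :=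
  \rank (kermx (B1 B)^T).

Definition inYc (l n m : nat) (A : 'M[R]_(l, m)) (B : 'M[R]_(n, m))
  (c y : 'cV[R]_m) : Prop :=
  inP A y /\ forall z, inD B z -> vpow y z = vpow c z.

Definition qvec (m : nat) (y1 y2 : 'cV[R]_m) (j : 'I_m) : R :=
  (y1 j 0 - y2 j 0) / (y1 j 0 + y2 j 0).

Definition qvals (m : nat) (q : 'I_m -> R) : seq R :=
  sort (fun a b : R => b <= a) (undup [seq q j | j : 'I_m]).

Definition omega (m : nat) (q : 'I_m -> R) : nat := size (qvals q).

(* lumped vector, 0-based: btilde i = sum over the (i+1)-th class I_{i+1} *)
Definition btilde (m : nat) (q : 'I_m -> R) (b : 'cV[R]_m) (i : nat) : R :=
  \sum_(j < m | q j == nth 0 (qvals q) i) b j 0.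

End Defs.

From HB Require Import structures.
From mathcomp Require Import all_boot all_order all_algebra.
From mathcomp Require Import all_classical all_reals exp.
From mathcomp Require Import all_analysis.
From mathcomp Require Import ring lra.
Import Order.TTheory GRing.Theory Num.Theory.
Import numFieldNormedType.Exports.
Local Open Scope ring_scope.

(* The open segment P is parametrised by s in (-1, 1) as
   y(s) = ((1 + s) y1 + (1 - s) y2) / 2, whose coordinates are
   y(s)_j = (y1_j + y2_j) / 2 * (1 + s q_j).  Since b spans D, y(s) lies in Y_c
   iff g(s) := sum_j b_j ln (1 + s q_j) equals a constant depending on c.
   Grouping the indices into the classes I_i of q and summing by parts writes
   g(s) - g(s') for s' < s as a combination of the partial sums of b~ with
   strictly positive weights, so the sign condition makes g strictly monotone.
   Near s = 1 (resp. s = -1), g differs by a bounded amount from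
   b~_omega ln (1 - s) (resp. b~_1 ln (1 + s)); these coefficients have opposite
   signs, so g takes every real value by the intermediate value theorem. *)

Set Implicit Arguments. Unset Strict Implicit.

Section QValues.
Variables (R : realType) (m : nat) (q : 'I_m -> R).

Lemma qvals_uniq : uniq (qvals q).
Proof. by rewrite /qvals sort_uniq undup_uniq. Qed.

Lemma mem_qvals j : q j \in qvals q.
Proof. by rewrite /qvals mem_sort mem_undup map_f // mem_enum. Qed.

Lemma nth_qvals_im i : (i < omega q)%N -> exists j, nth 0 (qvals q) i = q j.
Proof.
move=> hi; have := mem_nth 0 hi; rewrite /qvals mem_sort mem_undup.
by case/mapP => j _ ->; exists j.
Qed.

Lemma nth_qvals_le i j : (i <= j < omega q)%N ->
  nth 0 (qvals q) j <= nth 0 (qvals q) i.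
Proof.
move=> /andP [hij hj].
have sorted_qvals : sorted (fun a b : R => b <= a) (qvals q).
  by apply: sort_sorted => a b; exact: le_total.
apply: (sorted_leq_nth _ _ 0 sorted_qvals) => //.
- by move=> a b c /= ba cb; apply: le_trans cb ba.
- by apply: leq_ltn_trans hij hj.
Qed.

Lemma nth_qvals_lt i j : (i < j < omega q)%N ->
  nth 0 (qvals q) j < nth 0 (qvals q) i.
Proof.
move=> /andP [hij hj].
have hi : (i < omega q)%N by apply: ltn_trans hij hj.
rewrite lt_neqAle nth_qvals_le ?(ltnW hij) ?hj // andbT.
by rewrite (nth_uniq 0 hj hi qvals_uniq) eq_sym neq_ltn hij.
Qed.

Lemma sum_qclass (b : 'cV[R]_m) (f : R -> R) :
  \sum_(j < m) b j 0 * f (q j) =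
  \sum_(i < omega q) btilde q b i * f (nth 0 (qvals q) i).
Proof.
have class_lt : forall j, (index (q j) (qvals q) < omega q)%N.
  by move=> j; rewrite /omega index_mem mem_qvals.
rewrite (partition_big (fun j => Ordinal (class_lt j)) xpredT) //=.
apply: eq_bigr => i _; rewrite /btilde mulr_suml.
apply: eq_big => j /=.
  apply/eqP/eqP => [<- /=|qj]; first by rewrite nth_index // mem_qvals.
  by apply/val_inj; rewrite /= qj index_uniq // qvals_uniq.
by move=> /eqP <-; rewrite /= nth_index // mem_qvals.
Qed.

Lemma sum_btilde (b : 'cV[R]_m) :
  \sum_(i < omega q) btilde q b i = \sum_(j < m) b j 0.
Proof.
transitivity (\sum_(i < omega q) btilde q b i * (fun=> 1) (nth 0 (qvals q) i)).
  by apply: eq_bigr => i _; rewrite mulr1.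
by rewrite -(sum_qclass b (fun=> 1)); apply: eq_bigr => j _; rewrite mulr1.
Qed.

Lemma btildeN (b : 'cV[R]_m) i : btilde q (- b) i = - btilde q b i.
Proof. by rewrite /btilde -sumrN; apply: eq_bigr => j _; rewrite mxE. Qed.

Hypothesis q_bound : forall j, -1 <= q j <= 1.

Lemma nth_qvals_bound i : (i < omega q)%N -> -1 <= nth 0 (qvals q) i <= 1.
Proof. by move=> /nth_qvals_im [j ->]. Qed.

Lemma btilde_first (b : 'cV[R]_m) : (exists j, q j = 1) ->
  btilde q b 0 = \sum_(j < m | q j == 1) b j 0.
Proof.
move=> [j0 qj0]; rewrite /btilde; suff -> : nth 0 (qvals q) 0 = 1 by [].
have one_in : 1 \in qvals q by rewrite -qj0 mem_qvals.
have hk : (index 1%R (qvals q) < omega q)%N by rewrite /omega index_mem.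
have w_gt0 : (0 < omega q)%N by apply: leq_ltn_trans hk.
apply/eqP; rewrite eq_le; apply/andP; split.
  by case/andP: (nth_qvals_bound w_gt0).
by have := @nth_qvals_le 0 _ hk; rewrite nth_index.
Qed.

Lemma btilde_last (b : 'cV[R]_m) : (exists j, q j = -1) ->
  btilde q b (omega q).-1 = \sum_(j < m | q j == -1) b j 0.
Proof.
move=> [j0 qj0]; rewrite /btilde; suff -> : nth 0 (qvals q) (omega q).-1 = -1 by [].
have m1_in : -1 \in qvals q by rewrite -qj0 mem_qvals.
have hk : (index (-1)%R (qvals q) < omega q)%N by rewrite /omega index_mem.
have hl : ((omega q).-1 < omega q)%N by rewrite prednK //; apply: leq_ltn_trans hk.
apply/eqP; rewrite eq_le; apply/andP; split; last first.
  by case/andP: (nth_qvals_bound hl).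
have := @nth_qvals_le (index (-1)%R (qvals q)) (omega q).-1.
by rewrite nth_index // hl andbT -ltnS prednK //; [apply | apply: leq_ltn_trans hk].
Qed.

End QValues.

Section SummationByParts.
Variable R : realType.

Lemma sum_by_parts (be ph : nat -> R) k :
  \sum_(i < k.+1) be i * ph i =
  \sum_(i < k) (\sum_(i' < i.+1) be i') * (ph i - ph i.+1)
  + (\sum_(i' < k.+1) be i') * ph k.
Proof.
elim: k => [|k IH]; first by rewrite big_ord0 add0r !big_ord1.
rewrite big_ord_recr /= IH [in RHS]big_ord_recr /=.
rewrite [\sum_(i' < k.+2) be i']big_ord_recr /=.
ring.
Qed.

(* Summing by parts turns the sum into a nonnegative combination of the
   positive increments [ph i - ph i.+1], the first one with weight [be 0]. *)
Lemma sum_by_parts_gt0 (be ph : nat -> R) k :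
  (forall i, (i < k.+1)%N -> 0 <= \sum_(i' < i.+1) be i') ->
  0 < be 0%N ->
  (forall i, (i < k.+1)%N -> ph i.+1 < ph i) ->
  \sum_(i < k.+2) be i = 0 ->
  0 < \sum_(i < k.+2) be i * ph i.
Proof.
move=> partial_ge0 be0_gt0 ph_decr total0.
rewrite sum_by_parts total0 mul0r addr0 big_ord_recl /= big_ord1.
apply: ltr_pwDl; first by rewrite mulr_gt0 // subr_gt0 ph_decr.
apply: sumr_ge0 => i _.
have i_lt : (lift ord0 i < k.+1)%N by rewrite /= ltnS.
by rewrite mulr_ge0 ?partial_ge0 // subr_ge0 ltW // ph_decr.
Qed.

End SummationByParts.

Section Escape.
Variable R : realType.

Lemma escape_log_asymptote (F : R -> R) (be M K : R) : be != 0 ->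
  (forall s, 0 <= s < 1 -> `|F s - be * ln (1 - s)| <= M) ->
  exists2 s, 0 <= s < 1 & be * (F s - K) < 0.
Proof.
move=> be_neq0 near1.
have be_norm_gt0 : 0 < `|be| by rewrite normr_gt0.
have M_ge0 : 0 <= M by apply: le_trans (near1 0 _); rewrite ?normr_ge0 // lexx ltr01.
pose L := (`|K| + M) / `|be| + 1.
have L_gt0 : 0 < L by rewrite ltr_pwDr ?ltr01 // divr_ge0 // addr_ge0.
have beL : `|be| * L = `|K| + M + `|be|.
  by rewrite mulrDr mulr1 mulrC -mulrA mulVf ?mulr1 ?lt0r_neq0.
(* at [s = 1 - e^-L] the log term [be * ln (1 - s) = - be * L] dominates *)
have s_in : 0 <= 1 - expR (- L) < 1.
  by rewrite subr_ge0 expR_le1 oppr_le0 ltW //= ltrBlDr ltrDl expR_gt0.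
exists (1 - expR (- L)) => //.
have := near1 _ s_in; rewrite (_ : 1 - (1 - expR (- L)) = expR (- L)); last by ring.
rewrite expRK ler_norml => /andP [lo hi].
have K_le := ler_norm K; have NK_le := ler_norm (- K); rewrite normrN in NK_le.
case: (ltrgt0P be) beL => [be_gt0|be_lt0|/eqP]; last by rewrite (negPf be_neq0).
- by move=> beL; nra.
- by move=> beL; nra.
Qed.

Lemma opp_sign_between (x y v : R) : (x - v) * (y - v) < 0 ->
  Num.min x y <= v <= Num.max x y.
Proof.
move=> opp; rewrite ge_min le_max.
have [xv | vx] := lerP x v.
  by rewrite /= (ltW (_ : v < y)) ?orbT //; nra.
by rewrite /= (ltW vx) (_ : y <= v) //; nra.
Qed.

End Escape.

Section LogSum.
Variables (R : realType) (m : nat).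

Definition lnsum (b : 'cV[R]_m) (q : 'I_m -> R) (s : R) : R :=
  \sum_(j < m) b j 0 * ln (1 + s * q j).

Lemma add1M_gt0 (s x : R) : -1 < s < 1 -> -1 <= x <= 1 -> 0 < 1 + s * x.
Proof.
move=> /andP [s_gt s_lt] /andP [x_ge x_le].
have [x_ge0 | x_lt0] := lerP 0 x; first nra.
have : 0 <= (1 - s) * - x by apply: mulr_ge0; lra.
nra.
Qed.

Lemma ln_add1M_diff_lt (s s' x x' : R) : -1 < s' -> s' < s -> s < 1 ->
  -1 <= x' -> x' < x -> x <= 1 ->
  ln (1 + s * x') - ln (1 + s' * x') < ln (1 + s * x) - ln (1 + s' * x).
Proof.
move=> s'_gt s'_lt s_lt x'_ge x'_lt x_le.
have p1 : 0 < 1 + s * x by nra.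
have p2 : 0 < 1 + s' * x by nra.
have p3 : 0 < 1 + s * x' by nra.
have p4 : 0 < 1 + s' * x' by nra.
rewrite ltrBDr addrAC ltrBDl -!lnM ?posrE // ltr_ln ?posrE ?mulr_gt0 //.
nra.
Qed.

Lemma norm_ln_add1M_le (s x : R) : 0 <= s <= 1 -> -1 < x ->
  `|ln (1 + s * x)| <= `|ln (1 + x)|.
Proof.
move=> /andP [s_ge0 s_le1] x_gt.
have [x_ge0 | x_lt0] := lerP 0 x.
  have sx_ge1 : 1 <= 1 + s * x by nra.
  rewrite !ger0_norm ?ln_ge0 ?ler_ln ?posrE; nra.
have sx_le1 : 1 + s * x <= 1 by nra.
have x_le_sx : x <= s * x by nra.
rewrite !ler0_norm ?ln_le0 ?lerN2 ?ler_ln ?posrE //; nra.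
Qed.

Lemma lnsumN (b : 'cV[R]_m) q s : lnsum (- b) q s = - lnsum b q s.
Proof. by rewrite /lnsum -sumrN; apply: eq_bigr => j _; rewrite mxE mulNr. Qed.

Lemma lnsum_opp_arg (b : 'cV[R]_m) q s : lnsum b q (- s) = lnsum b (fun j => - q j) s.
Proof. by apply: eq_bigr => j _; rewrite mulNr mulrN. Qed.

Section BoundedWeights.
Variable q : 'I_m -> R.
Hypothesis q_bound : forall j, -1 <= q j <= 1.

Lemma lnsum_lt (b : 'cV[R]_m) s s' :
  \sum_(j < m) b j 0 = 0 ->
  (1 < omega q)%N ->
  (forall i, (i < (omega q).-1)%N -> 0 <= \sum_(i' < i.+1) btilde q b i') ->
  0 < btilde q b 0 ->
  -1 < s' -> s' < s -> s < 1 -> lnsum b q s' < lnsum b q s.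
Proof.
move=> b_sum0 w_gt1 partial_ge0 b0_gt0 s'_gt s'_lt s_lt.
rewrite -subr_gt0 /lnsum -sumrB.
under eq_bigr do rewrite -mulrBr.
rewrite (sum_qclass q b (fun x => ln (1 + s * x) - ln (1 + s' * x))).
have [k wk] : exists k, omega q = k.+2.
  by exists (omega q).-2; case: (omega q) w_gt1 => [|[|w]].
have := sum_btilde q b; rewrite b_sum0.
move: partial_ge0; rewrite wk => partial_ge0 total0.
pose ph i := ln (1 + s * nth 0 (qvals q) i) - ln (1 + s' * nth 0 (qvals q) i).
apply: (sum_by_parts_gt0 (ph := ph)) => // i i_lt.
have i1_lt : (i.+1 < omega q)%N by rewrite wk.
have [/andP [? ?] /andP [? ?]] :=
  (nth_qvals_bound q_bound i1_lt, nth_qvals_bound q_bound (ltnW i1_lt)).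
by apply: ln_add1M_diff_lt => //; apply: nth_qvals_lt; rewrite ltnSn.
Qed.

Lemma lnsum_inj (b : 'cV[R]_m) s s' :
  \sum_(j < m) b j 0 = 0 ->
  ((forall i, (i < (omega q).-1)%N -> 0 <= \sum_(i' < i.+1) btilde q b i') \/
   (forall i, (i < (omega q).-1)%N -> \sum_(i' < i.+1) btilde q b i' <= 0)) ->
  btilde q b 0 * btilde q b (omega q).-1 < 0 ->
  -1 < s < 1 -> -1 < s' < 1 -> lnsum b q s = lnsum b q s' -> s = s'.
Proof.
move=> b_sum0 partial_sign ends_opp /andP [s_gt s_lt] /andP [s'_gt s'_lt].
have w_gt1 : (1 < omega q)%N.
  by move: ends_opp; case: (omega q) => [|[|k]] //=; rewrite -expr2 ltNge sqr_ge0.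
have b0_neq0 : btilde q b 0 != 0.
  by apply: contraTneq ends_opp => ->; rewrite mul0r ltxx.
have w1_gt0 : (0 < (omega q).-1)%N by case: (omega q) w_gt1 => [|[|]].
have lnsum_neq x y : -1 < y -> y < x -> x < 1 -> lnsum b q y != lnsum b q x.
  move=> y_gt yx x_lt; case: partial_sign => partial_sign.
    apply/negbT/lt_eqF; apply: lnsum_lt => //.
    rewrite lt_neqAle eq_sym b0_neq0 /=.
    by have := partial_sign 0%N w1_gt0; rewrite big_ord1.
  rewrite -eqr_opp -!lnsumN; apply/negbT/lt_eqF; apply: lnsum_lt => //.
  - transitivity (- \sum_(j < m) b j 0); last by rewrite b_sum0 oppr0.
    by rewrite -sumrN; apply: eq_bigr => j _; rewrite mxE.
  - by move=> i i_lt; under eq_bigr do rewrite btildeN; rewrite sumrN oppr_ge0 partial_sign.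
  - rewrite btildeN oppr_gt0 lt_neqAle b0_neq0 /=.
    by have := partial_sign 0%N w1_gt0; rewrite big_ord1.
move=> eq_s; case: (ltgtP s s') => // [ss' | s's].
- by move: (lnsum_neq s' s s_gt ss' s'_lt); rewrite eq_s eqxx.
- by move: (lnsum_neq s s' s'_gt s's s_lt); rewrite eq_s eqxx.
Qed.

Lemma lnsum_continuous (b : 'cV[R]_m) s : -1 < s < 1 ->
  {for s, continuous (lnsum b q)}.
Proof.
move=> s_in; apply: (cvg_big add_continuous) => j _.
have : {for s, continuous (fun x : R => b j 0 * ln (1 + x * q j))}; last exact.
apply: continuousM; first exact: cvg_cst.
apply: (@continuous_comp _ _ _ (fun x : R => 1 + x * q j) (@ln R)).
  apply: continuousD; first exact: cvg_cst.
  apply: continuousM; [exact: cvg_id | exact: cvg_cst].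
exact/continuous_ln/add1M_gt0.
Qed.

Lemma lnsum_near1 (b : 'cV[R]_m) : exists M, forall s, 0 <= s < 1 ->
  `|lnsum b q s - (\sum_(j < m | q j == -1) b j 0) * ln (1 - s)| <= M.
Proof.
exists (\sum_(j < m | q j != -1) `|b j 0| * `|ln (1 + q j)|).
move=> s /andP [s_ge0 s_lt1].
rewrite /lnsum (bigID (fun j => q j == -1)) /= mulr_suml.
rewrite (eq_bigr (fun j => b j 0 * ln (1 - s))) => [|j /eqP ->]; last by rewrite mulrN1.
rewrite addrAC subrr add0r.
apply: le_trans (ler_norm_sum _ _ _) _; apply: ler_sum => j qj.
rewrite normrM ler_wpM2l // norm_ln_add1M_le ?s_ge0 ?ltW //.
by rewrite lt_neqAle eq_sym qj; case/andP: (q_bound j).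
Qed.

End BoundedWeights.

Lemma lnsum_onto (q : 'I_m -> R) (b : 'cV[R]_m) K :
  (forall j, -1 <= q j <= 1) ->
  (\sum_(j < m | q j == 1) b j 0) * (\sum_(j < m | q j == -1) b j 0) < 0 ->
  exists2 s, -1 < s < 1 & lnsum b q s = K.
Proof.
set bp := \sum_(j < m | q j == 1) _; set bm := \sum_(j < m | q j == -1) _.
move=> q_bound ends_opp.
have bm_neq0 : bm != 0 by apply: contraTneq ends_opp => ->; rewrite mulr0 ltxx.
have bp_neq0 : bp != 0 by apply: contraTneq ends_opp => ->; rewrite mul0r ltxx.
have qN_bound j : -1 <= - q j <= 1.
  by rewrite lerNr opprK andbC lerNl; exact: q_bound.
have [M1 near1] := lnsum_near1 q_bound b.
have [M2 nearN1] := lnsum_near1 qN_bound b.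
have [s1 /andP [s1_ge0 s1_lt1] side1] := escape_log_asymptote K bm_neq0 near1.
have nearN1' s : 0 <= s < 1 -> `|lnsum b q (- s) - bp * ln (1 - s)| <= M2.
  rewrite lnsum_opp_arg (_ : bp = \sum_(j < m | - q j == -1) b j 0); first exact: nearN1.
  by apply: eq_bigl => j; rewrite eqr_oppLR opprK.
have [t /andP [t_ge0 t_lt1] sideN1] := escape_log_asymptote K bp_neq0 nearN1'.
have t_le_s1 : - t <= s1 by lra.
have cont : {within `[- t, s1], continuous (lnsum b q)}%classic.
  apply: continuous_in_subspaceT => x; rewrite inE /= in_itv /= => /andP [? ?].
  by apply: lnsum_continuous => //; apply/andP; split; lra.
have between : Num.min (lnsum b q (- t)) (lnsum b q s1) <= K <=
               Num.max (lnsum b q (- t)) (lnsum b q s1).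
  by apply: opp_sign_between; nra.
have [s s_in sK] := IVT t_le_s1 cont between.
exists s => //; move: s_in; rewrite in_itv /= => /andP [? ?].
by apply/andP; split; lra.
Qed.

End LogSum.

Section MonomialDependency.
Variables (R : realType) (n m : nat) (B : 'M[R]_(n, m)).

Lemma vpow_expR (y z : 'cV[R]_m) : (forall j, 0 < y j 0) ->
  vpow y z = expR (\sum_(j < m) z j 0 * ln (y j 0)).
Proof.
move=> y_pos; rewrite /vpow expR_sum; apply: eq_bigr => j _.
by rewrite /powR gt_eqF.
Qed.

Lemma inD_sum0 (z : 'cV[R]_m) : inD B z -> \sum_(j < m) z j 0 = 0.
Proof.
move=> /(congr1 (fun M : 'M[R]_(n + 1, 1) => M (rshift n (0 : 'I_1)) 0)).
rewrite !mxE => row_n0; rewrite -[RHS]row_n0; apply: eq_bigr => j _.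
by rewrite /B1 col_mxEd mxE mul1r.
Qed.

Lemma mondep1_inD (b z : 'cV[R]_m) : mondep B = 1%N -> inD B b -> b != 0 ->
  inD B z -> exists la : R, forall j, z j 0 = la * b j 0.
Proof.
move=> d1 bD b_neq0 zD.
have sub_ker (x : 'cV[R]_m) : inD B x -> (x^T <= kermx (B1 B)^T)%MS.
  by move=> xD; apply/sub_kermxP; rewrite -trmx_mul xD trmx0.
have rank_b : \rank b^T = 1%N.
  rewrite rank_rV; case: eqP => // bT0.
  by move: b_neq0; rewrite -[b]trmxK bT0 trmx0 eqxx.
have ker_sub_b : (kermx (B1 B)^T <= b^T)%MS.
  have := mxrank_leqif_sup (sub_ker b bD).
  by move: d1; rewrite /mondep => ->; rewrite rank_b => -[_ <-].
have /submxP [D zD'] := submx_trans (sub_ker z zD) ker_sub_b.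
exists (D 0 0) => j.
have := congr1 (fun M : 'M[R]_(1, m) => M 0 j) zD'.
by rewrite !mxE big_ord1 !mxE.
Qed.

Lemma mondep1_vpow_eqP (b y c : 'cV[R]_m) :
  mondep B = 1%N -> inD B b -> b != 0 ->
  (forall j, 0 < y j 0) -> (forall j, 0 < c j 0) ->
  (forall z, inD B z -> vpow y z = vpow c z) <->
  \sum_(j < m) b j 0 * ln (y j 0) = \sum_(j < m) b j 0 * ln (c j 0).
Proof.
move=> d1 bD b_neq0 y_pos c_pos; split => [/(_ b bD)|eq_b z zD].
  by rewrite !vpow_expR //; exact: expR_inj.
have [la zb] := mondep1_inD d1 bD b_neq0 zD.
rewrite !vpow_expR //; congr expR.
under eq_bigr do rewrite zb -mulrA.
under [RHS]eq_bigr do rewrite zb -mulrA.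
by rewrite -!mulr_sumr eq_b.
Qed.

End MonomialDependency.

Section Segment.
Variables (R : realType) (l m : nat) (A : 'M[R]_(l, m)).

Definition Pbar_segment (y1 y2 : 'cV[R]_m) : Prop :=
  forall y, inPbar A y <->
    exists t : R, 0 <= t <= 1 /\ y = (1 - t) *: y1 + t *: y2.

Lemma Pbar_segment_sym y1 y2 : Pbar_segment y1 y2 -> Pbar_segment y2 y1.
Proof.
move=> seg y; rewrite seg.
by split=> -[t [/andP [t_ge0 t_le1] ->]]; exists (1 - t);
  (split; first by apply/andP; split; lra); rewrite subKr addrC.
Qed.

Lemma Pbar_segment_ends y1 y2 : Pbar_segment y1 y2 -> inPbar A y1 /\ inPbar A y2.
Proof.
move=> seg; split; apply/seg.
  by exists 0; rewrite lexx ler01 subr0 scale1r scale0r addr0.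
by exists 1; rewrite lexx ler01 subrr scale0r scale1r add0r.
Qed.

(* If [y1] had no zero coordinate, [Pbar] would extend beyond [y1] in the
   direction [y1 - y2]. *)
Lemma Pbar_segment_end_zero y1 y2 : Pbar_segment y1 y2 -> y1 != y2 ->
  exists j, y1 j 0 = 0.
Proof.
move=> seg y1_neq_y2.
have [[Ay1 [y1_ge0 y1_sum]] [Ay2 [y2_ge0 y2_sum]]] := Pbar_segment_ends seg.
apply/not_existsP => y1_neq0.
have y1_pos j : 0 < y1 j 0 by rewrite lt_neqAle eq_sym y1_ge0 andbT; apply/eqP.
pose S := \sum_(j < m) y2 j 0 / y1 j 0.
have S_ge0 : 0 <= S by apply: sumr_ge0 => j _; rewrite divr_ge0.
pose eps := (1 + S)^-1.
have eps_gt0 : 0 < eps by rewrite invr_gt0; lra.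
have eps_y2_le j : eps * y2 j 0 <= y1 j 0.
  have : y2 j 0 / y1 j 0 <= S.
    by rewrite /S (bigD1 j) //= lerDl sumr_ge0 // => k _; rewrite divr_ge0.
  rewrite ler_pdivrMr // => y2_le.
  by rewrite mulrC ler_pdivrMr; have := y1_pos j; nra.
have : inPbar A (y1 + eps *: (y1 - y2)).
  split; first by rewrite mulmxDr -scalemxAr mulmxBr Ay1 Ay2 subrr scaler0 addr0.
  split=> [j|]; first by rewrite !mxE; have := eps_y2_le j; have := y1_pos j; nra.
  under eq_bigr do rewrite !mxE.
  by rewrite big_split /= -mulr_sumr sumrB y1_sum y2_sum subrr mulr0 addr0.
move=> /seg [t [/andP [t_ge0 _] eq_t]].
move/eqP: y1_neq_y2; apply; apply/matrixP => i k; rewrite (ord1 k).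
have := congr1 (fun M : 'cV[R]_m => M i 0) eq_t; rewrite !mxE => eq_ti.
have /eqP : (eps + t) * (y1 i 0 - y2 i 0) = 0 by lra.
by rewrite mulf_eq0 subr_eq0 => /orP [/eqP|/eqP //]; lra.
Qed.

Variables (y1 y2 : 'cV[R]_m).
Hypotheses (seg : Pbar_segment y1 y2) (y1_neq_y2 : y1 != y2).
Hypothesis kerA_pos : exists y : 'cV[R]_m, A *m y = 0 /\ forall j, 0 < y j 0.

Local Notation q := (qvec y1 y2).

Lemma ends_add_gt0 j : 0 < y1 j 0 + y2 j 0.
Proof.
have [[_ [y1_ge0 _]] [_ [y2_ge0 _]]] := Pbar_segment_ends seg.
have [y [Ay y_pos]] := kerA_pos.
pose sy := \sum_(k < m) y k 0.
have sy_gt0 : 0 < sy.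
  rewrite /sy (bigD1 j) //= ltr_pwDl // sumr_ge0 // => k _.
  exact: ltW.
have : inPbar A (sy^-1 *: y).
  split; first by rewrite -scalemxAr Ay scaler0.
  split=> [k|]; first by rewrite mxE mulr_ge0 ?invr_ge0 ?ltW.
  by under eq_bigr do rewrite mxE; rewrite -mulr_sumr mulVf ?lt0r_neq0.
move=> /seg [t [/andP [t_ge0 t_le1] /(congr1 (fun M : 'cV[R]_m => M j 0))]].
rewrite !mxE => eq_j.
have : 0 < sy^-1 * y j 0 by rewrite mulr_gt0 ?invr_gt0.
by rewrite eq_j; have := y1_ge0 j; have := y2_ge0 j; nra.
Qed.

Lemma qvecE j : q j * (y1 j 0 + y2 j 0) = y1 j 0 - y2 j 0.
Proof. by rewrite divfK // lt0r_neq0 // ends_add_gt0. Qed.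

Lemma qvec_bound j : -1 <= q j <= 1.
Proof.
have [[_ [y1_ge0 _]] [_ [y2_ge0 _]]] := Pbar_segment_ends seg.
have := ends_add_gt0 j; have := qvecE j; have := y1_ge0 j; have := y2_ge0 j.
by move=> *; apply/andP; split; nra.
Qed.

Lemma qvec_eqN1 j : (q j == -1) = (y1 j 0 == 0).
Proof.
have := ends_add_gt0 j; have := qvecE j => qE pos.
by apply/eqP/eqP => [qj | y1j]; [move: qE; rewrite qj; lra | nra].
Qed.

Lemma qvec_eq1 j : (q j == 1) = (y2 j 0 == 0).
Proof.
have := ends_add_gt0 j; have := qvecE j => qE pos.
by apply/eqP/eqP => [qj | y2j]; [move: qE; rewrite qj; lra | nra].
Qed.

Lemma y1_has_zero : exists j, y1 j 0 = 0.
Proof. exact: Pbar_segment_end_zero seg y1_neq_y2. Qed.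

Lemma y2_has_zero : exists j, y2 j 0 = 0.
Proof.
by apply: Pbar_segment_end_zero (Pbar_segment_sym seg) _; rewrite eq_sym.
Qed.

Lemma qvec_attainsN1 : exists j, q j = -1.
Proof.
by have [j y1j] := y1_has_zero; exists j; apply/eqP; rewrite qvec_eqN1 y1j.
Qed.

Lemma qvec_attains1 : exists j, q j = 1.
Proof.
by have [j y2j] := y2_has_zero; exists j; apply/eqP; rewrite qvec_eq1 y2j.
Qed.

Definition segpt (s : R) : 'cV[R]_m := ((1 + s) / 2) *: y1 + ((1 - s) / 2) *: y2.

Lemma segptE s j : segpt s j 0 = (y1 j 0 + y2 j 0) / 2 * (1 + s * q j).
Proof. by rewrite !mxE /qvec; field; rewrite lt0r_neq0 ?ends_add_gt0. Qed.

Lemma segpt_gt0 s j : -1 < s < 1 -> 0 < segpt s j 0.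
Proof.
by move=> s_in; rewrite segptE mulr_gt0 ?divr_gt0 ?ends_add_gt0 ?add1M_gt0 ?qvec_bound.
Qed.

Lemma inP_segpt s : -1 < s < 1 -> inP A (segpt s).
Proof.
move=> s_in; have [[Ay1 [_ y1_sum]] [Ay2 [_ y2_sum]]] := Pbar_segment_ends seg.
split; first by rewrite mulmxDr -!scalemxAr Ay1 Ay2 !scaler0 addr0.
split=> [j|]; first exact: segpt_gt0.
under eq_bigr do rewrite !mxE.
by rewrite big_split /= -!mulr_sumr y1_sum y2_sum; lra.
Qed.

Lemma inP_segptP y : inP A y -> exists2 s, -1 < s < 1 & y = segpt s.
Proof.
move=> [Ay [y_pos y_sum]].
have /seg [t [/andP [t_ge0 t_le1] eq_y]] : inPbar A y.
  by split=> //; split=> // j; exact: ltW.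
have [j1 y1j] := y1_has_zero.
have [j2 y2j] := y2_has_zero.
have t_gt0 : 0 < t.
  rewrite lt_neqAle t_ge0 andbT; apply/eqP => t0.
  by have := y_pos j1; rewrite eq_y -t0 !mxE y1j; lra.
have t_lt1 : t < 1.
  rewrite lt_neqAle t_le1 andbT; apply/eqP => t1.
  by have := y_pos j2; rewrite eq_y t1 !mxE y2j; lra.
exists (1 - 2 * t); first by apply/andP; split; lra.
by rewrite eq_y /segpt; congr (_ *: _ + _ *: _); lra.
Qed.

Lemma sum_ln_segpt (b : 'cV[R]_m) s : -1 < s < 1 ->
  \sum_(j < m) b j 0 * ln (segpt s j 0) =
  \sum_(j < m) b j 0 * ln ((y1 j 0 + y2 j 0) / 2) + lnsum b q s.
Proof.
move=> s_in; rewrite /lnsum -big_split /=; apply: eq_bigr => j _.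
by rewrite segptE lnM ?posrE ?divr_gt0 ?ends_add_gt0 ?add1M_gt0 ?qvec_bound // mulrDr.
Qed.

End Segment.

Unset Implicit Arguments. Set Strict Implicit.

Theorem theorem2 (R : realType) (l n m : nat)
  (A : 'M[R]_(l, m)) (B : 'M[R]_(n, m)) (y1 y2 b : 'cV[R]_m) :
  (exists y : 'cV[R]_m, A *m y = 0 /\ forall j, 0 < y j 0) ->
  affdim_eq (inP A) 1 ->
  y1 != y2 ->
  (forall y, inPbar A y <->
     exists t : R, 0 <= t <= 1 /\ y = (1 - t) *: y1 + t *: y2) ->
  mondep B = 1%N ->
  inD B b -> b != 0 ->
  let q := qvec y1 y2 in
  let w := omega q in
  ((forall i : nat, (i < w.-1)%N -> 0 <= \sum_(i' < i.+1) btilde q b i') \/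
   (forall i : nat, (i < w.-1)%N -> \sum_(i' < i.+1) btilde q b i' <= 0)) ->
  btilde q b 0 * btilde q b w.-1 < 0 ->
  forall c : 'cV[R]_m, (forall j, 0 < c j 0) ->
    exists! y : 'cV[R]_m, inYc A B c y.
Proof.
move=> kerA_pos _ y1_neq_y2 seg d1 bD b_neq0 q w partial_sign ends_opp c c_pos.
have q_bound := qvec_bound seg kerA_pos.
pose K := \sum_(j < m) b j 0 * ln (c j 0) -
          \sum_(j < m) b j 0 * ln ((y1 j 0 + y2 j 0) / 2).
have inYc_segpt s : -1 < s < 1 -> inYc A B c (segpt y1 y2 s) <-> lnsum b q s = K.
  move=> s_in; rewrite /inYc (mondep1_vpow_eqP d1 bD b_neq0 _ c_pos); last first.
    by move=> j; exact: (segpt_gt0 seg kerA_pos).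
  rewrite (sum_ln_segpt seg kerA_pos) // /K.
  by split=> [[_ eq_c] | eq_K]; [lra | split; [exact: inP_segpt | lra]].
have ends_opp' :
    (\sum_(j < m | q j == 1) b j 0) * (\sum_(j < m | q j == -1) b j 0) < 0.
  rewrite -(btilde_first q_bound b (qvec_attains1 seg y1_neq_y2 kerA_pos)).
  by rewrite -(btilde_last q_bound b (qvec_attainsN1 seg y1_neq_y2 kerA_pos)).
have [s s_in sK] := lnsum_onto K q_bound ends_opp'.
exists (segpt y1 y2 s); split=> [|y Yc_y]; first exact/inYc_segpt.
have [s' s'_in eq_y] := inP_segptP seg y1_neq_y2 Yc_y.1.
rewrite eq_y in Yc_y *; congr segpt.
apply: (lnsum_inj q_bound (inD_sum0 bD) partial_sign ends_opp s_in s'_in).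
by rewrite sK; symmetry; apply/inYc_segpt.
Qed.
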